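(* Let $G=G_1\cup G_2$, where $G_1\cap G_2$ is a clique. If both $G_1$ and $G_2$ have clique-based $\infty$-admissibility at most $t$, then $G$ has clique-based $\infty$-admissibility at most $t$ as well.
   Context: All graphs are finite and simple. Given an ordering $v_1,\ldots,v_n$ of $V(G)$, the $\infty$-backconnectivity of $v_k$ is the maximum number of paths (of any length) from $v_k$ to $\{v_1,\ldots,v_{k-1}\}$ that pairwise intersect only in $v_k$; the $\infty$-admissibility of the ordering is the maximum $\infty$-backconnectivity over its vertices. For $X\subseteq V(G)$, $G$ has $X$-based $\infty$-admissibility at most $t$ if there is an ordering $v_1,\ldots,v_n$ of $V(G)$ with $\infty$-admissibility at most $t$ and $X=\{v_1,\ldots,v_{|X|}\}$. $G$ has clique-based $\infty$-admissibility at most $t$ if it has $X$-based $\infty$-admissibility at most $t$ for every $X\subseteq V(G)$ inducing a clique in $G$. *)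

From mathcomp Require Import all_boot.
Set Implicit Arguments. Unset Strict Implicit. Unset Printing Implicit Defensive.

Section Graphs.
Variable T : finType.

Definition simple_graph (V : {set T}) (E : rel T) : Prop :=
  [/\ symmetric E, irreflexive E & forall x y, E x y -> (x \in V) && (y \in V)].

(* p is the list of vertices after v of a path v, p_1, ..., p_m from v to the
   set S: the path is simple, consecutive vertices are adjacent, it ends in S,
   and no earlier vertex (v included) lies in S. *)
Definition path_to (E : rel T) (S : pred T) (v : T) (p : seq T) : bool :=
  [&& uniq (v :: p), path E v p, p != [::], last v p \in S
    & all (fun x => x \notin S) (belast v p)].

(* infinity-backconnectivity of v in the ordering s is at most t: every family
   of paths from v to the set of vertices preceding v in s that pairwise
   intersect only in v has at most t members. *)
Definition backconn_le (E : rel T) (s : seq T) (v : T) (t : nat) : Prop :=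
  forall P : seq (seq T),
    all (path_to E (mem (take (index v s) s)) v) P ->
    pairwise (fun p q => ~~ has (mem q) p) P ->
    size P <= t.

Definition ordering (V : {set T}) (s : seq T) : Prop := uniq s /\ s =i V.

Definition adm_le (E : rel T) (s : seq T) (t : nat) : Prop :=
  forall v, v \in s -> backconn_le E s v t.

Definition X_based_adm_le (V : {set T}) (E : rel T) (X : {set T}) (t : nat) : Prop :=
  exists s, [/\ ordering V s, adm_le E s t & [set x in take #|X| s] = X].

Definition is_clique (E : rel T) (X : {set T}) : Prop :=
  forall x y, x \in X -> y \in X -> x != y -> E x y.

Definition clique_based_adm_le (V : {set T}) (E : rel T) (t : nat) : Prop :=
  forall X : {set T}, X \subset V -> is_clique E X -> X_based_adm_le V E X t.

End Graphs.

From mathcomp Require Import all_boot.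
Set Implicit Arguments. Unset Strict Implicit. Unset Printing Implicit Defensive.

(* Take an X-based ordering of G1 (X a clique of G1) and a (V1 ∩ V2)-based
   ordering of G2, and append to the first the vertices of V2 \ V1 in the
   order of the second.  Back-paths of a vertex of V1 become back-paths of G1
   once their vertices outside V1 are deleted: an excursion outside V1 runs in
   G2 and leaves and re-enters V1 through the clique V1 ∩ V2, so the deleted
   segment can be replaced by a single edge.  Back-paths of a vertex outside
   V1 stay in G2 until they first meet V1, i.e. V1 ∩ V2, which precedes that
   vertex in the ordering of G2.  Finally, a clique of G1 ∪ G2 lies in V1 or
   in V2, since an edge leaving V1 is an edge of G2. *)

Lemma take_index_cat (A : eqType) (v : A) (a b : seq A) : v \notin a ->
  take (index v (a ++ b)) (a ++ b) = a ++ take (index v b) b.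
Proof.
move=> va; rewrite index_cat (negbTE va) take_cat ltnNge leq_addr /=.
by rewrite addKn.
Qed.

Lemma size_ordering (T : finType) (V : {set T}) (s : seq T) :
  ordering V s -> size s = #|V|.
Proof. by case=> us sV; rewrite -(card_uniqP us); apply: eq_card. Qed.

Lemma simple_graph_edge (T : finType) (V : {set T}) (E : rel T) x y :
  simple_graph V E -> E x y -> (x \in V) && (y \in V).
Proof. by case=> _ _; apply. Qed.

Section Gluing.
Variable T : finType.
Variables (V1 V2 : {set T}) (E1 E2 E : rel T).
Hypotheses (G1 : simple_graph V1 E1) (G2 : simple_graph V2 E2).
Hypotheses (clique1 : is_clique E1 (V1 :&: V2)) (clique2 : is_clique E2 (V1 :&: V2)).
Hypothesis E_union : forall x y, E x y = E1 x y || E2 x y.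

Lemma edge_out_V1_in_V2 x y : E x y -> (x \notin V1) || (y \notin V1) ->
  (x \in V2) && (y \in V2).
Proof.
rewrite E_union => /orP[/(simple_graph_edge G1)/andP[-> ->] // | E2xy _].
exact: simple_graph_edge G2 E2xy.
Qed.

(* [c] is the last vertex of V1 met so far; when [x] is not [c], the path has
   left V1 at [c], which therefore lies in the clique V1 ∩ V2. *)
Lemma path_filter_V1_gen p : forall x c, uniq (c :: p) -> path E x p ->
  (x = c /\ x \in V1) \/ [/\ x \in V2, x \notin V1 & c \in V1 :&: V2] ->
  path E1 c (filter (mem V1) p).
Proof.
elim: p => [|y p IH] x c //= /andP[cnp up] /andP[Exy pp] Hx.
move: cnp; rewrite in_cons negb_or => /andP[cy cnp].
case yV1: (y \in V1) => /=.
  apply/andP; split; last by apply: (IH y y) => //; left.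
  case: Hx => [[xc cV1]|[_ xV1 cC]].
    subst x; move: Exy; rewrite E_union => /orP[// | /(simple_graph_edge G2)/andP[cV2 yV2]].
    by apply: (clique1 _ _ cy); rewrite inE ?cV1 ?cV2 ?yV1.
  have /andP[_ yV2] : (x \in V2) && (y \in V2) by apply: edge_out_V1_in_V2; rewrite ?xV1.
  by apply: (clique1 cC _ cy); rewrite inE yV1.
have /andP[xV2 yV2] : (x \in V2) && (y \in V2) by apply: edge_out_V1_in_V2; rewrite // yV1 orbT.
apply: (IH y c) => //=; first by rewrite cnp; case/andP: up.
right; split; rewrite ?yV1 //.
by case: Hx => [[xc xV1]|[]] //; rewrite -xc inE xV1.
Qed.

Lemma path_E2 x p : all (fun z => z \notin V1) (belast x p) ->
  path E x p -> path E2 x p.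
Proof.
elim: p x => [|y p IH] x //= /andP[xV1 al] /andP[Exy pp].
rewrite IH // andbT; move: Exy; rewrite E_union => /orP[/(simple_graph_edge G1)|//].
by rewrite (negbTE xV1).
Qed.

Lemma path_to_filter_V1 (S : seq T) v p : {subset S <= V1} -> v \in V1 ->
  path_to E (mem S) v p -> path_to E1 (mem S) v (filter (mem V1) p).
Proof.
move=> SV1 vV1; case/lastP: p => [|q z]; first by case/and5P.
rewrite /path_to last_rcons belast_rcons => /and5P[u pa _ zS al].
have filter_rcons_z : filter (mem V1) (rcons q z) = rcons (filter (mem V1) q) z.
  by rewrite filter_rcons /= (SV1 z zS).
rewrite filter_rcons_z last_rcons belast_rcons zS.
apply/and5P; split=> //.
- by have := filter_uniq (mem V1) u; rewrite /= vV1 filter_rcons_z.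
- by rewrite -filter_rcons_z; apply: (path_filter_V1_gen (x := v)) => //; left.
- by case: (filter _ q).
move: al => /= /andP[-> /allP al]; apply/allP => y.
by rewrite mem_filter => /andP[_ /al].
Qed.

Lemma path_to_E2 (S S2 : pred T) v p : {subset S2 <= S} -> {subset V1 <= S} ->
  (forall y, y \in S -> y \in V2 -> y \in S2) ->
  path_to E S v p -> path_to E2 S2 v p.
Proof.
move=> S2S V1S SV2 /and5P[u pa ne zS al].
have pa2 : path E2 v p.
  by apply: path_E2 pa; apply: sub_all al => y; apply: contra; apply: V1S.
apply/and5P; split=> //.
- apply: SV2 => //; case/lastP: p ne pa2 {u pa zS al} => [|q z] // _.
  by rewrite rcons_path last_rcons => /andP[_ /(simple_graph_edge G2)/andP[]].
by apply: sub_all al => y; apply: contra; apply: S2S.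
Qed.

Section GluedOrdering.
Variables (s1 s2 : seq T).
Hypotheses (ord1 : ordering V1 s1) (ord2 : ordering V2 s2).
Hypothesis prefix2 : [set x in take #|V1 :&: V2| s2] = V1 :&: V2.

Local Notation k := #|V1 :&: V2|.
Local Notation d := (drop k s2).

Lemma mem_take_prefix2 y : (y \in take k s2) = (y \in V1 :&: V2).
Proof. by rewrite -[in RHS]prefix2 inE. Qed.

Lemma mem_drop_prefix2 y : (y \in d) = (y \in V2) && (y \notin V1).
Proof.
case: ord2 => u2 e2.
have : uniq (take k s2 ++ d) by rewrite cat_take_drop.
rewrite cat_uniq => /and3P[_ /hasPn disj _].
apply/idP/andP => [yd | [yV2 yV1]].
  have yV2 : y \in V2 by rewrite -e2 (mem_drop yd).
  split=> //; apply: contra (disj y yd) => yV1.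
  by rewrite /= mem_take_prefix2 inE yV1.
have : y \in s2 by rewrite e2.
by rewrite -{1}(cat_take_drop k s2) mem_cat mem_take_prefix2 inE (negbTE yV1).
Qed.

Lemma ordering_glue : ordering (V1 :|: V2) (s1 ++ d).
Proof.
case: ord1 ord2 => u1 e1 [u2 _]; split.
  rewrite cat_uniq u1 drop_uniq //= andbT; apply/hasPn => y.
  by rewrite mem_drop_prefix2 e1 => /andP[].
move=> y; rewrite mem_cat mem_drop_prefix2 e1 !inE.
by case: (y \in V1); case: (y \in V2).
Qed.

Lemma backconn_le_glue_V1 t v : v \in s1 -> backconn_le E1 s1 v t ->
  backconn_le E (s1 ++ d) v t.
Proof.
move=> vs1 bc; rewrite /backconn_le index_cat vs1 takel_cat ?index_size //.
move=> P paths disj; rewrite -(size_map (filter (mem V1))); apply: bc.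
  apply/allP => _ /mapP[p pP ->]; apply: path_to_filter_V1 (allP paths p pP).
    by move=> y /mem_take; rewrite ord1.2.
  by rewrite -ord1.2.
rewrite pairwise_map; apply: sub_pairwise disj => p q; apply: contra.
by case/hasP=> x; rewrite /= !mem_filter => /andP[_ xp] /andP[_ xq]; apply/hasP; exists x.
Qed.

Lemma backconn_le_glue_V2 t v : v \in d -> backconn_le E2 s2 v t ->
  backconn_le E (s1 ++ d) v t.
Proof.
move=> vd; have /andP[vV2 vV1] : (v \in V2) && (v \notin V1) by rewrite -mem_drop_prefix2.
have vs1 : v \notin s1 by rewrite ord1.2.
have vtk : v \notin take k s2 by rewrite mem_take_prefix2 inE negb_and vV1.
rewrite /backconn_le -{1 2}[s2](cat_take_drop k) !take_index_cat //.
move=> bc P paths disj; apply: bc disj; apply: sub_all paths => p.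
apply: path_to_E2 => y; rewrite !mem_cat.
- case/orP=> [|->]; last by rewrite orbT.
  by rewrite mem_take_prefix2 inE ord1.2 => /andP[->].
- by rewrite ord1.2 => ->.
case/orP=> [ys1 yV2|->]; last by rewrite orbT.
by rewrite mem_take_prefix2 inE -ord1.2 ys1 yV2.
Qed.

End GluedOrdering.

Lemma X_based_adm_le_glue (t : nat) (X : {set T}) : X \subset V1 ->
  X_based_adm_le V1 E1 X t -> X_based_adm_le V2 E2 (V1 :&: V2) t ->
  X_based_adm_le (V1 :|: V2) E X t.
Proof.
move=> XV1 [s1 [ord1 adm1 pre1]] [s2 [ord2 adm2 pre2]].
exists (s1 ++ drop #|V1 :&: V2| s2); split; first exact: ordering_glue.
  move=> v; rewrite mem_cat => /orP[vs1|vd].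
    exact: backconn_le_glue_V1 (adm1 v vs1).
  exact: backconn_le_glue_V2 (adm2 v (mem_drop vd)).
by rewrite takel_cat ?pre1 // (size_ordering ord1) subset_leq_card.
Qed.

Lemma clique_union_subset (X : {set T}) : X \subset V1 :|: V2 -> is_clique E X ->
  X \subset V1 \/ X \subset V2.
Proof.
move=> XV Xcl; case: (boolP (X \subset V1)) => [|/subsetPn[a aX aV1]]; first by left.
right; apply/subsetP => b bX; case: (eqVneq a b) => [<- | ab].
  by move: (subsetP XV a aX); rewrite inE (negbTE aV1).
have /andP[_ //] : (a \in V2) && (b \in V2).
by apply: (edge_out_V1_in_V2 (Xcl a b aX bX ab)); rewrite aV1.
Qed.

Lemma clique_union_restrict (X : {set T}) : X \subset V1 -> is_clique E X -> is_clique E1 X.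
Proof.
move=> XV1 Xcl x y xX yX xy; move: (Xcl x y xX yX xy); rewrite E_union.
case/orP=> // /(simple_graph_edge G2)/andP[xV2 yV2].
by apply: clique1 xy; rewrite inE (subsetP XV1) ?xV2 ?yV2.
Qed.

Lemma X_based_adm_le_union (t : nat) (X : {set T}) : X \subset V1 -> is_clique E X ->
  clique_based_adm_le V1 E1 t -> clique_based_adm_le V2 E2 t ->
  X_based_adm_le (V1 :|: V2) E X t.
Proof.
move=> XV1 Xcl C1 C2.
apply: (X_based_adm_le_glue XV1 (C1 X XV1 (clique_union_restrict XV1 Xcl))).
exact: C2 (subsetIr V1 V2) clique2.
Qed.

End Gluing.

Theorem lemma25 (T : finType) (V1 V2 : {set T}) (E1 E2 : rel T) (t : nat) :
  simple_graph V1 E1 -> simple_graph V2 E2 ->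
  (* G1 ∩ G2 = (V1 :&: V2, E1 ∩ E2) is a clique *)
  (forall x y, x \in V1 :&: V2 -> y \in V1 :&: V2 -> x != y -> E1 x y && E2 x y) ->
  clique_based_adm_le V1 E1 t -> clique_based_adm_le V2 E2 t ->
  clique_based_adm_le (V1 :|: V2) (fun x y => E1 x y || E2 x y) t.
Proof.
move=> G1 G2 cliqueC C1 C2 X XV; set E := fun x y => _ || _ => Xcl.
have E_union : forall x y, E x y = E1 x y || E2 x y by [].
have clique1 : is_clique E1 (V1 :&: V2) by move=> x y xC yC /(cliqueC x y xC yC)/andP[].
have clique2 : is_clique E2 (V1 :&: V2) by move=> x y xC yC /(cliqueC x y xC yC)/andP[].
have [XV1|XV2] := clique_union_subset G1 G2 E_union XV Xcl.
  exact: (X_based_adm_le_union G1 G2 clique1 clique2 E_union XV1 Xcl C1 C2).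
have E_union' x y : E x y = E2 x y || E1 x y by rewrite orbC.
rewrite setUC; rewrite setIC in clique1 clique2.
exact: (X_based_adm_le_union G2 G1 clique2 clique1 E_union' XV2 Xcl C2 C1).
Qed.
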